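(* For $N\in\mathbb{N}$, let $\pi_N$ be the law of the number of fixed points of a uniformly random permutation of $\{1,\dots,N\}$, and let $\mathcal{P}$ be the Poisson law on $\mathbb{Z}_+=\{0,1,2,\dots\}$ with parameter $1$. Then $$\lim_{N\to\infty}\frac{1}{N\ln N}\,\ln\big(\|\pi_N-\mathcal{P}\|_{\mathrm{tv}}\big)=-1 .$$
   Context: For probability measures $\mu,\mu'$ on $\mathbb{Z}_+$, $\|\mu-\mu'\|_{\mathrm{tv}}=\sup_{A\subset\mathbb{Z}_+}|\mu(A)-\mu'(A)|=\sum_{n}(\mu(n)-\mu'(n))_+$. *)

From HB Require Import structures.
From mathcomp Require Import all_boot all_order all_algebra all_fingroup.
From mathcomp Require Import all_classical all_reals all_analysis.
Set Implicit Arguments. Unset Strict Implicit. Unset Printing Implicit Defensive.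
Import Order.TTheory GRing.Theory Num.Theory.
Import numFieldNormedType.Exports.
Local Open Scope ring_scope.

Definition nfix (N : nat) (s : 'S_N) : nat := #|[set i : 'I_N | s i == i]|.

Definition piN (R : realType) (N k : nat) : R :=
  (#|[set s : 'S_N | nfix s == k]|)%:R / (N`!)%:R.

Definition poisson1 (R : realType) (k : nat) : R := expR (-1) / (k`!)%:R.

(* total variation distance: sum_n (pi_N(n) - P(n))_+  (series over all n) *)
Definition tv_piN_poisson (R : realType) (N : nat) : R :=
  limn (series (fun n : nat => Num.max (piN R N n - poisson1 R n) 0)).

(* The argument is elementary and quantitative.
   - Counting: every j-set of points is fixed by (N - j)! permutations, so the
     factorial moments of the number of fixed points are sum_s C(nfix s, j) =
     C(N, j) (N - j)!.  Binomial inversion then gives the rencontres formula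
     pi_N(k) = (1/k!) sum_(i <= N - k) (-1)^i / i!.
   - Analysis: the exponential series at -1 is within 2/m! of exp(-1) after
     m + 1 terms (its terms decay geometrically), hence
     |pi_N(k) - P(k)| <= 2 C(N, k) / N!  and  d_N <= 2^(N+1) / N!,
     while the single term k = N gives d_N >= (1 - exp(-1)) / N!.
   - Asymptotics: with N ln N - N <= ln N! <= N ln N these two bounds yield
     |ln d_N / (N ln N) + 1| <= K / ln N for an explicit constant K, and the
     theorem follows. *)

From HB Require Import structures.
From mathcomp Require Import all_boot all_order all_algebra all_fingroup.
From mathcomp Require Import all_classical all_reals all_analysis.
From mathcomp Require Import ring lra.
Import Order.TTheory GRing.Theory Num.Theory.
Import numFieldNormedType.Exports.
Local Open Scope ring_scope.

(* A set B of points is fixed pointwise by exactly (N - #|B|)! permutations: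
   those whose support lies in the complement of B. *)
Lemma card_perm_fixing N (B : {set 'I_N}) :
  #|[pred s : 'S_N | B \subset [set i | s i == i]]| = (N - #|B|)`!.
Proof.
have -> : #|[pred s : 'S_N | B \subset [set i | s i == i]]| = #|perm_on (~: B)|.
  apply: eq_card => s; rewrite !inE /perm_on.
  apply/fintype.subsetP/fintype.subsetP => fixB x; rewrite !inE.
    by apply: contraNN => xB; have := fixB x xB; rewrite inE.
  move=> xB; apply/negPn/negP => moved.
  by have := fixB x moved; rewrite inE xB.
by rewrite card_perm cardsCs finset.setCK card_ord.
Qed.

(* Factorial moments of the number of fixed points: double counting the pairs
   (s, B) with B a j-set of fixed points of s gives E[C(nfix, j)] = 1/j!. *)
Lemma factorial_moment_nfix N j :
  (\sum_(s : 'S_N) 'C(nfix s, j) = 'C(N, j) * (N - j)`!)%N.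
Proof.
have draws s : 'C(nfix s, j) =
    (\sum_(B : {set 'I_N} | #|B| == j) (B \subset [set i | s i == i]))%N.
  rewrite /nfix -cards_draws -sum1_card big_mkcond [RHS]big_mkcond /=.
  by apply: eq_bigr => B _; rewrite inE andbC; case: (_ == j); case: (_ \subset _).
rewrite (eq_bigr _ (fun s _ => draws s)) exchange_big /=.
rewrite (eq_bigr (fun _ => (N - j)`!)) => [|B /eqP cardB]; last first.
  by rewrite -big_mkcond sum1_card card_perm_fixing cardB.
rewrite sum_nat_const -[in 'C(N, j)](card_ord N) -card_draws; congr (_ * _)%N.
by apply: eq_card => B; rewrite inE.
Qed.

Lemma nfix_le {N} (s : 'S_N) : (nfix s <= N)%N.
Proof. by rewrite -[N in (_ <= N)%N]card_ord max_card. Qed.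

(* Binomial inversion: sum_j (-1)^j C(j,k) C(m,j) = (-1)^k [m = k].  Induction
   on m, splitting C(m+1, j+1) and then C(j+1, k+1) by Pascal's rule. *)
Lemma alt_binomial_inversion (R : comRingType) m k :
  \sum_(j < m.+1) (-1)^+j * 'C(j, k)%:R * 'C(m, j)%:R
  = (-1)^+k * (m == k)%:R :> R.
Proof.
elim: m k => [|m IH] k.
  rewrite big_ord1 /= expr0 bin0 mul1r mulr1 bin0n.
  by case: k => [|k] /=; rewrite ?mulr0 ?expr0 ?mulr1.
have IH' n : \sum_(j < m.+2) (-1)^+j * 'C(j, n)%:R * 'C(m, j)%:R
             = (-1)^+n * (m == n)%:R :> R.
  by rewrite big_ord_recr /= (@bin_small m m.+1) // mulr0 addr0 IH.
rewrite big_ord_recl /= bin0.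
under eq_bigr => j _ do rewrite binS natrD mulrDr.
rewrite big_split /= addrA.
move: (IH' k); rewrite big_ord_recl /= bin0 => ->.
case: k => [|k].
  under eq_bigr => j _ do rewrite !bin0 exprS mulN1r !mulNr.
  rewrite sumrN -(IH 0%N).
  by under eq_bigr => j _ do rewrite bin0; rewrite subrr mulr0.
under eq_bigr => j _ do rewrite binS natrD mulrDr mulrDl exprS mulN1r !mulNr.
rewrite big_split /= !sumrN !IH eqSS exprS.
by case: (m == k.+1); case: (m == k); ring.
Qed.

(* Truncation-free form of the inversion: for m <= N the indicator of m = k is
   an alternating sum over the fixed range j <= N (the extra terms vanish). *)
Lemma indicator_alt_sum (R : comRingType) N m k : (m <= N)%N ->
  (m == k)%:R = (-1)^+k * \sum_(j < N.+1) (-1)^+j * 'C(j, k)%:R * 'C(m, j)%:R :> R.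
Proof.
move=> le_mN; set F := fun j : nat => (-1)^+j * 'C(j, k)%:R * 'C(m, j)%:R : R.
have -> : \sum_(j < N.+1) F j = \sum_(j < m.+1) F j.
  rewrite [RHS](big_ord_widen N.+1 F (_ : m.+1 <= N.+1)%N) // [RHS]big_mkcond.
  apply: eq_bigr => j _; case: ifP => // /negbT; rewrite -leqNgt => lt_mj.
  by rewrite /F (@bin_small m j) // mulr0.
by rewrite alt_binomial_inversion mulrA -exprMn mulrNN mulr1 expr1n mul1r.
Qed.

Section Rencontres.
Variable R : realType.

Lemma natr_fact_neq0 n : n`!%:R != 0 :> R.
Proof. by rewrite pnatr_eq0 -lt0n fact_gt0. Qed.

(* Summing the inversion over all permutations expresses pi_N(k) through the
   factorial moments 1/j!. *)
Lemma piN_alt_sum N k :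
  piN R N k = (-1)^+k * \sum_(j < N.+1) (-1)^+j * 'C(j, k)%:R / j`!%:R.
Proof.
rewrite /piN.
have -> : #|[set s : 'S_N | nfix s == k]| = (\sum_(s : 'S_N) (nfix s == k))%N.
  rewrite -sum1_card big_mkcond /=.
  by apply: eq_bigr => s _; rewrite inE; case: (_ == _).
rewrite natr_sum.
rewrite (eq_bigr _ (fun s _ => @indicator_alt_sum R N (nfix s) k (nfix_le s))).
rewrite -mulr_sumr exchange_big /= -mulrA mulr_suml; congr (_ * _).
apply: eq_bigr => j _.
rewrite -mulr_sumr -!natr_sum -mulrA factorial_moment_nfix.
have le_jN : (j <= N)%N by rewrite -ltnS ltn_ord.
have -> : ('C(N, j) * (N - j)`!)%:R = N`!%:R / j`!%:R :> R.
  by rewrite -(bin_fact le_jN) !natrM; field; rewrite natr_fact_neq0.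
by field; rewrite !natr_fact_neq0.
Qed.

Lemma piN_exp_partial_sum N k : (k <= N)%N ->
  piN R N k = k`!%:R^-1 * series (exp_coeff (-1 : R)) (N - k).+1.
Proof.
move=> le_kN.
rewrite piN_alt_sum -(big_mkord xpredT (fun j => (-1)^+j * 'C(j, k)%:R / j`!%:R : R)).
rewrite (@big_cat_nat _ _ _ k) //=; last by rewrite (leq_trans le_kN).
rewrite big_nat_cond big1 ?add0r => [|i /andP[/andP[_ lt_ik] _]]; last first.
  by rewrite bin_small // mulr0 mul0r.
rewrite (big_addn 0 N.+1 k) subSn // /series /= !mulr_sumr.
apply: eq_bigr => i _.
have binE : 'C(i + k, k)%:R = (i + k)`!%:R / (k`! * i`!)%:R :> R.
  by rewrite -(bin_fact (leq_addl i k)) addnK natrM mulfK.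
rewrite /exp_coeff /= binE (addnC i k) exprD -!mulrA signrMK natrM.
by field; rewrite !natr_fact_neq0.
Qed.

(* A permutation of N points has at most N fixed points. *)
Lemma piN_eq0 N k : (N < k)%N -> piN R N k = 0.
Proof.
move=> lt_Nk; rewrite piN_alt_sum big1 ?mulr0 // => j _.
by rewrite bin_small ?mulr0 ?mul0r // (leq_trans _ lt_Nk) // -ltnS ltn_ord.
Qed.

End Rencontres.

Lemma fact_exp2_le {m i} : (m < i)%N -> (m`! * 2 ^ i <= i`! * 2 ^ m.+1)%N.
Proof.
elim: i => [//|i IH]; rewrite ltnS leq_eqVlt => /orP[/eqP <-|lt_mi].
  by rewrite leq_mul2r factS leq_pmull ?fact_gt0 ?orbT.
rewrite expnS factS mulnCA -mulnA (leq_trans (leq_mul (leqnn 2) (IH lt_mi))) //.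
by rewrite leq_mul2r ltnS (leq_trans _ lt_mi) ?orbT.
Qed.

Local Open Scope classical_set_scope.

Section ExpTail.
Variable R : realType.

Lemma sum_half_powers a b : (a <= b)%N ->
  \sum_(a <= i < b) (2^-1 : R) ^+ i = 2 * 2^-1 ^+ a - 2 * 2^-1 ^+ b.
Proof.
elim: b => [|b IH]; first by rewrite leqn0 => /eqP ->; rewrite big_geq // subrr.
rewrite leq_eqVlt => /orP[/eqP ->|lt_ab]; first by rewrite big_geq // subrr.
by rewrite big_nat_recr //= IH // exprS; field.
Qed.

(* Any block of terms of index > m of the exponential series at -1 has absolute
   value at most 2/m!: the terms are dominated by 2^(m+1)/m! * 2^-i. *)
Lemma exp_series_block_le m M : (m < M)%N ->
  `|series (exp_coeff (-1 : R)) M - series (exp_coeff (-1 : R)) m.+1|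
  <= 2 / m`!%:R.
Proof.
move=> lt_mM.
rewrite /series /= (@big_cat_nat _ _ _ m.+1 0 M) //= addrAC subrr add0r.
apply: (le_trans (ler_norm_sum _ _ _)).
apply: (@le_trans _ _ (\sum_(m.+1 <= i < M) 2 ^+ m.+1 / m`!%:R * 2^-1 ^+ i)).
  rewrite big_nat_cond [X in _ <= X]big_nat_cond.
  apply: ler_sum => i /andP[/andP[lt_mi _] _].
  rewrite /exp_coeff /= normrM normrX normrN normr1 expr1n mul1r.
  rewrite normfV ger0_norm // exprVn.
  have := fact_exp2_le lt_mi; rewrite -(ler_nat R) !natrM !natrX => le_fact.
  rewrite -div1r ler_pdivrMr ?ltr0n ?fact_gt0 // mulrAC ler_pdivlMr ?exprn_gt0 //.
  by rewrite mulrAC ler_pdivlMr ?ltr0n ?fact_gt0 // mul1r mulrC (mulrC _ i`!%:R).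
rewrite -mulr_sumr sum_half_powers // mulrBr.
have -> : 2 ^+ m.+1 / m`!%:R * (2 * 2^-1 ^+ m.+1) = 2 / m`!%:R :> R.
  by rewrite exprVn; field; rewrite natr_fact_neq0 expf_neq0.
by rewrite gerBl // !mulr_ge0 ?divr_ge0 ?exprn_ge0.
Qed.

Lemma exp_series_tail_le m :
  `|series (exp_coeff (-1 : R)) m.+1 - expR (-1)| <= 2 / m`!%:R.
Proof.
have block : \forall M \near \oo,
    `|series (exp_coeff (-1 : R)) M - series (exp_coeff (-1 : R)) m.+1|
    <= 2 / m`!%:R.
  by exists m.+1 => // M /= le_mM; apply: exp_series_block_le.
rewrite distrC ler_distl; apply/andP; split.
  apply: limr_ge; first exact: is_cvg_series_exp_coeff.
  by apply: filterS block => M; rewrite ler_distl => /andP[].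
apply: limr_le; first exact: is_cvg_series_exp_coeff.
by apply: filterS block => M; rewrite ler_distl => /andP[].
Qed.

End ExpTail.

Lemma sum_binomial N : (\sum_(n < N.+1) 'C(N, n) = 2 ^ N)%N.
Proof.
have := expnDn 1 1 N; rewrite addn1 => ->.
by apply: eq_bigr => n _; rewrite !exp1n !muln1.
Qed.

Section TotalVariation.
Variable R : realType.

Definition tv_term N n : R := Num.max (piN R N n - poisson1 R n) 0.

Lemma tv_term_ge0 N n : 0 <= tv_term N n.
Proof. by rewrite /tv_term le_max lexx orbT. Qed.

Lemma poisson1_gt0 n : 0 < poisson1 R n.
Proof. by rewrite /poisson1 divr_gt0 ?expR_gt0 // ltr0n fact_gt0. Qed.

(* Beyond N the summands vanish, so the series is a finite sum. *)
Lemma tv_finite_sum N : tv_piN_poisson R N = \sum_(n < N.+1) tv_term N n.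
Proof.
rewrite /tv_piN_poisson; apply: lim_near_cst => //.
exists N.+1 => // M /= le_NM.
rewrite /series /= (@big_cat_nat _ _ _ N.+1 0 M) //= big_mkord.
rewrite [X in _ + X](_ : _ = 0) ?addr0 //.
rewrite big_nat_cond big1 // => n /andP[/andP[lt_Nn _] _].
by rewrite piN_eq0 // sub0r max_r // oppr_le0 ltW ?poisson1_gt0.
Qed.

(* By the rencontres formula and the tail estimate,
   |pi_N(n) - P(n)| <= (1/n!) * 2/(N-n)! = 2 C(N,n)/N!. *)
Lemma tv_term_le N n : (n <= N)%N -> tv_term N n <= 2 * 'C(N, n)%:R / N`!%:R.
Proof.
move=> le_nN.
apply: (@le_trans _ _ `|piN R N n - poisson1 R n|).
  by rewrite /tv_term ge_max ler_norm normr_ge0.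
rewrite piN_exp_partial_sum // /poisson1 (mulrC (expR _)) -mulrBr.
rewrite normrM ger0_norm ?invr_ge0 ?ler0n //.
rewrite (le_trans (ler_wpM2l _ (exp_series_tail_le R (N - n)))) ?invr_ge0 ?ler0n //.
have bin_neq0 : 'C(N, n)%:R != 0 :> R by rewrite pnatr_eq0 -lt0n bin_gt0.
rewrite -(bin_fact le_nN) !natrM le_eqVlt; apply/orP; left; apply/eqP.
by field; rewrite bin_neq0 !natr_fact_neq0.
Qed.

(* Summing over n and using sum_n C(N, n) = 2^N: d_N <= 2^(N+1)/N!. *)
Lemma tv_upper N : tv_piN_poisson R N <= 2 * 2 ^+ N / N`!%:R.
Proof.
rewrite tv_finite_sum.
apply: (@le_trans _ _ (\sum_(n < N.+1) 2 * 'C(N, n)%:R / N`!%:R)).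
  by apply: ler_sum => n _; apply: tv_term_le; rewrite -ltnS ltn_ord.
by rewrite -mulr_suml -mulr_sumr -natr_sum sum_binomial natrX.
Qed.

(* The term n = N alone: pi_N(N) = 1/N! while P(N) = exp(-1)/N!. *)
Lemma tv_lower N : (1 - expR (-1)) / N`!%:R <= tv_piN_poisson R N.
Proof.
rewrite tv_finite_sum big_ord_recr /= -[X in X <= _]add0r.
apply: lerD; first by apply: sumr_ge0 => i _; exact: tv_term_ge0.
rewrite /tv_term le_max; apply/orP; left.
rewrite piN_exp_partial_sum // subnn /series /= big_nat1 /exp_coeff /= expr0.
by rewrite /poisson1 fact0 divr1 mulr1 mulrBl mul1r.
Qed.

End TotalVariation.

Lemma fact_le_expn n : (n`! <= n ^ n)%N.
Proof.
elim: n => [//|n IH]; rewrite factS expnS leq_mul2l /=.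
by apply: (leq_trans IH); case: n {IH} => [//|n]; rewrite leq_exp2r.
Qed.

Section LogFactorial.
Variable R : realType.

Lemma ln_fact_le {N} : (0 < N)%N -> ln N`!%:R <= N%:R * ln (N%:R : R).
Proof.
move=> N_gt0.
have le_fact : N`!%:R <= N%:R ^+ N :> R by rewrite -natrX ler_nat fact_le_expn.
rewrite mulr_natl -lnXn ?ltr0n // ler_ln // posrE ?ltr0n ?fact_gt0 //.
by rewrite exprn_gt0 // ltr0n.
Qed.

(* The lower bound comes from the single term N^N/N! of the series of exp N. *)
Lemma ln_fact_ge {N} : (0 < N)%N -> N%:R * ln (N%:R : R) - N%:R <= ln N`!%:R.
Proof.
case: N => [//|n] _.
have le_exp : n.+1%:R ^+ n.+1 / n.+1`!%:R <= expR n.+1%:R :> R.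
  by apply: le_trans (expR_ge1Dxn n (ler0n _ _)); rewrite lerDr.
have term_gt0 : 0 < n.+1%:R ^+ n.+1 / n.+1`!%:R :> R.
  by rewrite divr_gt0 // ?exprn_gt0 ?ltr0n ?fact_gt0.
move: le_exp; rewrite -ler_ln ?posrE ?expR_gt0 // expRK.
rewrite ln_div ?posrE ?exprn_gt0 ?ltr0n ?fact_gt0 // lnXn ?ltr0n // -mulr_natl.
by move=> h; lra.
Qed.

End LogFactorial.

Section Conclusion.
Variable R : realType.

Lemma tv_gt0 N : 0 < tv_piN_poisson R N.
Proof.
apply: lt_le_trans (tv_lower R N).
by rewrite divr_gt0 ?ltr0n ?fact_gt0 // subr_gt0 expR_lt1 ltrN10.
Qed.

Lemma ln_tv_bounds N :
  ln (1 - expR (-1)) - ln N`!%:R <= ln (tv_piN_poisson R N)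
  <= (N%:R + 1) * ln (2 : R) - ln N`!%:R.
Proof.
have fact_gt0 : 0 < N`!%:R :> R by rewrite ltr0n fact_gt0.
have c_gt0 : 0 < 1 - expR (-1) :> R by rewrite subr_gt0 expR_lt1 ltrN10.
apply/andP; split.
  rewrite -ln_div ?posrE // ler_ln ?posrE ?divr_gt0 ?tv_gt0 //.
  exact: tv_lower.
rewrite (le_trans (_ : _ <= ln (2 * 2 ^+ N / N`!%:R))) //.
  by rewrite ler_ln ?posrE ?tv_gt0 ?divr_gt0 ?mulr_gt0 ?exprn_gt0 // tv_upper.
rewrite ln_div ?posrE ?mulr_gt0 ?exprn_gt0 // lnM ?posrE ?exprn_gt0 // lnXn //.
by rewrite mulrDl mul1r mulr_natl [_ + ln 2]addrC.
Qed.

Definition rate_const : R := 2 * ln 2 + 1 - ln (1 - expR (-1)).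

(* Main estimate: |ln tv / (N ln N) + 1| <= K / ln N for N >= 2, since
   ln tv + N ln N lies between ln (1 - exp(-1)) and (N + 1) ln 2 + N. *)
Lemma ln_tv_ratio_le {N} : (2 <= N)%N ->
  `|-1 - ln (tv_piN_poisson R N) / (N%:R * ln (N%:R : R))|
  <= rate_const / ln (N%:R : R).
Proof.
move=> N_ge2.
have N_gt0 : (0 < N)%N by rewrite (leq_trans _ N_ge2).
set T := ln (tv_piN_poisson R N); set L := ln (N`!%:R : R).
set l := ln (N%:R : R); set n := (N%:R : R).
set c0 := ln (1 - expR (-1 : R)); set c1 := ln (2 : R).
have n_ge2 : 2 <= n by rewrite /n (ler_nat R 2 N).
have l_gt0 : 0 < l by rewrite /l ln_gt0 // (lt_le_trans _ n_ge2) // ltr1n.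
have n_gt0 : 0 < n by rewrite (lt_le_trans _ n_ge2).
have nl_gt0 : 0 < n * l by rewrite mulr_gt0.
have c0_lt0 : c0 < 0.
  by rewrite /c0 ln_lt0 // subr_gt0 expR_lt1 ltrN10 gtrBl expR_gt0.
have c1_gt0 : 0 < c1 by rewrite /c1 ln_gt0 // ltr1n.
have [T_ge T_le] : c0 - L <= T /\ T <= (n + 1) * c1 - L.
  by apply/andP; exact: ln_tv_bounds.
have L_le : L <= n * l by exact: ln_fact_le.
have L_ge : n * l - n <= L by exact: ln_fact_ge.
have -> : -1 - T / (n * l) = - ((T + n * l) / (n * l)) by field; rewrite !gt_eqF.
rewrite normrN normrM (@gtr0_norm _ (n * l)^-1) ?invr_gt0 // ler_pdivrMr //.
rewrite (_ : rate_const / l * (n * l) = rate_const * n); last by field; rewrite !gt_eqF.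
by rewrite /rate_const -/c0 -/c1 ler_norml; apply/andP; split; nra.
Qed.

End Conclusion.

Theorem mainTheorem1 (R : realType) :
  (fun N : nat => ln (tv_piN_poisson R N) / (N%:R * ln (N%:R : R)))
    @ \oo --> (-1 : R).
Proof.
apply/cvgrPdist_le => e e_gt0.
(* Once ln N >= K / e, the main estimate gives distance at most e. *)
exists (maxn 2 (Num.truncn (expR (rate_const R / e))).+1) => // N /=.
rewrite geq_max => /andP[N_ge2 N_large].
apply: le_trans (ln_tv_ratio_le R N_ge2) _.
have lnN_gt0 : 0 < ln (N%:R : R) by rewrite ln_gt0 // ltr1n.
rewrite ler_pdivrMr // -ler_pdivrMl // mulrC.
rewrite -[X in X <= _]expRK ler_ln ?posrE ?expR_gt0 ?ltr0n ?(leq_trans _ N_ge2) //.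
by apply/ltW/(lt_le_trans (truncnS_gt _)); rewrite ler_nat.
Qed.
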